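(* Let $w$ be a word over the alphabet $\{a^{\pm1},t^{\pm1},x^{\pm1}\}$ with $\sigma_x(w)=0$. If the equation $w=1$ has a solution in $L_2$, then it has a solution $x=(\delta,f)\in L_2$ with $$|\delta|\le 2^{|w|^2/2}+2|w|^2+3|w|+1 .$$
   Context: $\mathbb{Z}_2$ is the field with two elements and $\mathbb{Z}_2[z^{\pm1}]$ the ring of Laurent polynomials over it. The lamplighter group $L_2=\mathbb{Z}_2\wr\mathbb{Z}$ is realized as the set $\mathbb{Z}\times\mathbb{Z}_2[z^{\pm1}]$ with multiplication $(\delta_1,f_1)(\delta_2,f_2)=(\delta_1+\delta_2,\ f_1z^{-\delta_2}+f_2)$; it is generated by $a=(0,1)$ and $t=(1,0)$. A one-variable equation is given by a word $w$ over $\{a^{\pm1},t^{\pm1},x^{\pm1}\}$ (an element of the free group $F(a,t,x)$), $|w|$ is its length, and a solution of $w=1$ is an element $g\in L_2$ such that $w(a,t,g)=1$ in $L_2$, where $w(a,t,g)$ is the image of $w$ under the homomorphism $F(a,t,x)\to L_2$ with $a\mapsto a$, $t\mapsto t$, $x\mapsto g$. $\sigma_x(w)$ and $\sigma_t(w)$ denote the exponent sums of $x$ and of $t$ in $w$. *)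

From HB Require Import structures.
From mathcomp Require Import all_boot all_algebra.
From mathcomp Require Import finmap.
From Stdlib Require Reals.

Set Implicit Arguments.
Unset Strict Implicit.
Unset Printing Implicit Defensive.

Import GRing.Theory.
Local Open Scope fset_scope.

(* A Laurent polynomial over Z_2 is identified with its (finite) support:
   the finite set of exponents k with coefficient 1. *)
Definition laurent2 := {fset int}.

(* addition in Z_2[z^{+-1}] : symmetric difference of supports *)
Definition ladd (f g : laurent2) : laurent2 := (f `\` g) `|` (g `\` f).

(* f * z^{-d} : every exponent k is sent to k - d *)
Definition lshift (f : laurent2) (d : int) : laurent2 :=
  [fset (k - d)%R | k in f].

Definition L2 := (int * laurent2)%type.

Definition L2mul (g h : L2) : L2 :=
  ((g.1 + h.1)%R, ladd (lshift g.2 h.1) h.2).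

Definition L2one : L2 := (0%R, fset0).

Definition L2inv (g : L2) : L2 := ((- g.1)%R, lshift g.2 (- g.1)%R).

Definition L2a : L2 := (0%R, [fset (0%R : int)]).
Definition L2t : L2 := (1%R, fset0).

(* Words over {a^{+-1}, t^{+-1}, x^{+-1}}: a letter is a generator together
   with a flag that is true for the inverse letter. *)
Inductive gen := Ga | Gt | Gx.
Definition letter := (gen * bool)%type.
Definition word := seq letter.

Definition gen_img (g : L2) (s : gen) : L2 :=
  match s with Ga => L2a | Gt => L2t | Gx => g end.

Definition letter_img (g : L2) (l : letter) : L2 :=
  if l.2 then L2inv (gen_img g l.1) else gen_img g l.1.

Definition eval_word (w : word) (g : L2) : L2 :=
  foldr (fun l acc => L2mul (letter_img g l) acc) L2one w.

Definition sigma_x (w : word) : int :=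
  (\sum_(l <- w) (if l.1 is Gx then (if l.2 then -1 else 1) else 0))%R.

Definition is_solution (w : word) (g : L2) : Prop := eval_word w g = L2one.

Definition bound (n : nat) : Rdefinitions.R :=
  Rdefinitions.Rplus
    (Rpower.Rpower (Raxioms.INR 2)
       (Rdefinitions.Rdiv (Raxioms.INR (n * n)) (Raxioms.INR 2)))
    (Raxioms.INR (2 * (n * n) + 3 * n + 1)).

Definition abs_le_bound (delta : int) (n : nat) : Prop :=
  Rdefinitions.Rle (Raxioms.INR (absz delta)) (bound n).

From Pilot Require Import Defs.
From mathcomp Require Import all_boot all_algebra.
From mathcomp Require Import finmap.
From mathcomp Require Import zify ring.
Set Implicit Arguments.
Unset Strict Implicit.
Unset Printing Implicit Defensive.
Import GRing.Theory.
Local Open Scope ring_scope.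

(* Write x = (delta, f).  The first coordinate of w(a, t, x) is sigma_t(w) + delta sigma_x(w),
   so a solution forces sigma_t(w) = 0, and the equation becomes A(z^delta) = f P(z^delta) in
   Z_2[z^{+-1}], where the bivariate polynomials A(X, Y) and P(X, Y) collect the letters a and
   x^{+-1} of w: delta is good iff P(X^E) divides A(X^E) up to a power of X, for E = |delta|.
   Pseudo-divide c A = Q P + S in the variable Y, with c a power of the leading coefficient of P.
   A degree count shows that S = 0 as soon as some large E is good; beyond that threshold E is
   good iff c' divides Q(X^E), where c = X^i c', a condition periodic in E with period the
   order r <= 2^deg(c') of X modulo c'.  So some good E lies below threshold + r, and bounding
   the degrees of A and P by the numbers of letters t and x gives the estimate. *)

Lemma poly_drop_lowest (R : nzRingType) (u : {poly R}) : u != 0 ->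
  exists i, u = drop_poly i u * 'X^i /\ (drop_poly i u)`_0 != 0.
Proof.
move=> nz_u; have ex_nz : exists i, u`_i != 0.
  by exists (size u).-1; rewrite -lead_coefE lead_coef_eq0.
case: (ex_minnP ex_nz) => i nz_ui min_i; exists i; split; last by rewrite coef_drop_poly.
have take0 : take_poly i u = 0.
  apply/polyP => k; rewrite coef_take_poly coef0; case: ifP => // lt_ki.
  by apply/eqP; apply: contraT => /min_i; rewrite leqNgt lt_ki.
by rewrite -[LHS](poly_take_drop i) take0 add0r.
Qed.

Section LaurentDivisibility.
Variable R : idomainType.
Implicit Types u v : {poly R}.

(* Divisibility in R[X, X^-1]. *)
Definition ldvdp u v := exists j : nat, u %| 'X^j * v.

Lemma coprimep_Xn u j : u`_0 != 0 -> coprimep u 'X^j.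
Proof.
move=> nz_u0; have : coprimep u ('X - 0%:P) by rewrite coprimep_XsubC /root horner_coef0.
by rewrite polyC0 subr0 => /(coprimep_expr j).
Qed.

Lemma dvdp_XnM u v j : u`_0 != 0 -> (u %| 'X^j * v) = (u %| v).
Proof. by move=> nz_u0; rewrite Gauss_dvdpr // coprimep_Xn. Qed.

Lemma ldvdp_mulXn u v m : ldvdp (u * 'X^m) v <-> ldvdp u v.
Proof.
split=> [[j dvd_j] | [j dvd_j]]; first by exists j; apply: dvdp_trans dvd_j; apply: dvdp_mulIl.
by exists (m + j)%N; rewrite exprD -mulrA [_ * (_ * v)]mulrC dvdp_mul.
Qed.

Lemma ldvdp_size_le u v m : v != 0 -> ldvdp u v -> u`_m != 0 ->
  (size u <= m + size v)%N.
Proof.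
move=> nz_v [j dvd_uv] nz_um.
have nz_u : u != 0 by apply: contraNneq nz_um => ->; rewrite coef0.
have [i [def_u nz_u'0]] := poly_drop_lowest nz_u; set u' := drop_poly i u in def_u nz_u'0.
have nz_u' : u' != 0 by apply: contraNneq nz_u'0 => ->; rewrite coef0.
have le_im : (i <= m)%N.
  by move: nz_um; rewrite def_u coefMXn; case: ltnP => //; rewrite eqxx.
have dvd_u'v : u' %| v.
  rewrite -(dvdp_XnM v j nz_u'0); apply: dvdp_trans dvd_uv.
  by rewrite [X in _ %| X]def_u dvdp_mulIl.
by rewrite def_u size_mulXn // leq_add // dvdp_leq.
Qed.

End LaurentDivisibility.

Section SubstituteXn.
Variable R : idomainType.
Implicit Types P Q : {poly {poly R}}.

Lemma horner_Xn_eq0 Q E : (forall i, leq (size Q`_i) E) -> Q.['X^E] = 0 -> Q = 0.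
Proof.
elim/poly_ind: Q => [//|Q c IH] small_coefs; rewrite hornerMXaddC.
have {}small_coefs i : leq (size (cons_poly c Q)`_i) E by rewrite cons_poly_def; apply: small_coefs.
have small_c := small_coefs 0%N; rewrite coef_cons /= in small_c.
have small_Q i : leq (size Q`_i) E by have := small_coefs i.+1; rewrite coef_cons.
move=> QE0; have c0 : c = 0.
  apply/polyP => m; have := congr1 (fun p : {poly R} => p`_m) QE0.
  rewrite coefD coefMXn coef0; case: ltnP => [lt_mE | ]; first by rewrite add0r.
  by move=> le_Em _; apply/(leq_sizeP _ _ small_c); apply: leq_trans le_Em.
move: QE0; rewrite c0 addr0 => /eqP; rewrite mulf_eq0 expf_eq0 polyX_eq0 andbF orbF.
by move=> /eqP /(IH small_Q) ->; rewrite mul0r addr0.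
Qed.

Lemma size_horner_Xn_le Q k e E : (size Q <= k)%N -> (forall i, leq (size Q`_i) e) ->
  (size Q.['X^E] <= k.-1 * E + e)%N.
Proof.
elim/poly_ind: Q k => [|Q c IH] k; first by move=> *; rewrite horner0 size_poly0.
rewrite hornerMXaddC -cons_poly_def => le_Qk small_coefs.
have small_c := small_coefs 0%N; rewrite coef_cons /= in small_c.
have small_Q i : leq (size Q`_i) e by have := small_coefs i.+1; rewrite coef_cons.
have [-> | nz_Q] := eqVneq Q 0.
  by rewrite horner0 mul0r add0r (leq_trans small_c) ?leq_addl.
rewrite size_cons_poly /nilp size_poly_eq0 (negbTE nz_Q) /= in le_Qk.
apply: leq_trans (size_polyD _ _) _; rewrite geq_max (leq_trans small_c) ?leq_addl // andbT.
have [-> | nz_QE] := eqVneq Q.['X^E] 0; first by rewrite mul0r size_poly0.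
rewrite size_mulXn //; apply: leq_trans (leq_add (leqnn E) (IH _ (leqnn _) small_Q)) _.
have pos_Q : (0 < size Q)%N by rewrite size_poly_gt0.
rewrite addnA -mulSn prednK // leq_add2r leq_mul2r orbC.
by rewrite -ltnS prednK // (leq_trans _ le_Qk).
Qed.

Lemma coef_horner_Xn_small P E m : (m < E)%N -> P.['X^E]`_m = P`_0`_m.
Proof.
elim/poly_ind: P => [|P c _] lt_mE; first by rewrite horner0 !coef0.
by rewrite hornerMXaddC coefD coefMXn lt_mE add0r -cons_poly_def coef_cons.
Qed.

Lemma poly_take_lead P :
  P = take_poly (size P).-1 P + (lead_coef P)%:P * 'X^((size P).-1).
Proof.
apply/polyP => i; rewrite coefD coef_take_poly coefCM coefXn lead_coefE.
case: ltngtP => cmp_i; rewrite ?mulr0 ?addr0 ?mulr1 ?add0r //.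
- by rewrite nth_default //; move: cmp_i; case: (size P).
- by rewrite cmp_i.
Qed.

(* For E > a the terms P_i(X) X^(iE) of P(X^E) have disjoint supports. *)
Lemma size_horner_Xn P E a : P != 0 -> (forall i, leq (size P`_i) a.+1) -> (a < E)%N ->
  size P.['X^E] = ((size P).-1 * E + size (lead_coef P))%N.
Proof.
move=> nz_P small_coefs lt_aE; set k := (size P).-1.
rewrite {1}(poly_take_lead P) hornerD hornerCM hornerXn -exprM -/k.
have nz_lc : lead_coef P != 0 by rewrite lead_coef_eq0.
have pos_lc : (0 < size (lead_coef P))%N by rewrite size_poly_gt0.
rewrite addrC size_polyDl size_mulXn // mulnC //.
have [k0 | pos_k] := posnP k.
  by rewrite k0 take_poly0l horner0 size_poly0 (leq_trans pos_lc) ?leq_addl.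
have small_take i : leq (size (take_poly k P)`_i) a.+1.
  by rewrite coef_take_poly; case: ifP; rewrite ?size_poly0.
apply: leq_ltn_trans (size_horner_Xn_le E (size_take_poly k P) small_take) _.
by rewrite -{2}(prednK pos_k) mulSn [(E + _)%N]addnC -addnA ltn_add2l; lia.
Qed.

Lemma horner_Xn_neq0 P E a : P != 0 -> (forall i, leq (size P`_i) a.+1) -> (a < E)%N ->
  P.['X^E] != 0.
Proof.
move=> nz_P small_P lt_aE; rewrite -size_poly_gt0 (size_horner_Xn nz_P small_P lt_aE).
by rewrite addn_gt0 size_poly_gt0 lead_coef_eq0 nz_P orbT.
Qed.

End SubstituteXn.

Section PseudoDivision.
Variable R : idomainType.
Implicit Types P A : {poly {poly R}}.

Lemma size_polyB_le (p q : {poly R}) m :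
  leq (size p) m -> leq (size q) m -> leq (size (p - q)) m.
Proof. by move=> le_p le_q; rewrite (leq_trans (size_polyD _ _)) // size_polyN geq_max le_p. Qed.

Section Step.
Variables (P A : {poly {poly R}}) (j : nat).
Let K := (size P).-1.
Let lc := lead_coef P.

(* One step of pseudo-division: kill the coefficient of Y^(K + j) in lc * A. *)
Definition pseudo_divp_step := lc%:P * A - (A`_(K + j))%:P * ('X^j * P).

Lemma size_pseudo_divp_step : P != 0 -> leq (size A) (K + j).+1 ->
  leq (size pseudo_divp_step) (K + j).
Proof.
move=> nz_P size_A.
apply/leq_sizeP => i le_Kj_i; rewrite coefB !coefCM coefXnM.
have -> : (i < j)%N = false by apply/negbTE; rewrite -leqNgt; lia.
have [-> | ne_i] := eqVneq i (K + j).
  by rewrite addnK /lc lead_coefE -/K mulrC subrr.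
have lt_Kj_i : (K + j < i)%N by rewrite ltn_neqAle eq_sym ne_i le_Kj_i.
have pos_P : (0 < size P)%N by rewrite size_poly_gt0.
rewrite (nth_default 0 (leq_trans size_A lt_Kj_i)) mulr0 sub0r.
by rewrite (nth_default 0 (_ : leq (size P) (i - j))) ?mulr0 ?oppr0 //; rewrite /K in lt_Kj_i; lia.
Qed.

Lemma coef_size_pseudo_divp_step a e i : (forall i, leq (size P`_i) a.+1) ->
  (forall i, leq (size A`_i) e) -> leq (size pseudo_divp_step`_i) (e + a).
Proof.
move=> small_P small_A.
rewrite coefB !coefCM coefXnM; apply: size_polyB_le.
  have le_lc : leq (size lc) a.+1 by rewrite /lc lead_coefE.
  apply: leq_trans (size_polyMleq _ _) _; rewrite -subn1; have := small_A i.
  by move: le_lc; set s1 := size lc; set s2 := size _; lia.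
case: ifP => _; first by rewrite mulr0 size_poly0.
apply: leq_trans (size_polyMleq _ _) _; rewrite -subn1.
have := small_A (K + j)%N; have := small_P (i - j)%N.
by set s1 := size _; set s2 := size _; lia.
Qed.

End Step.

Lemma pseudo_divp_coef_size P A a e j : P != 0 -> (forall i, leq (size P`_i) a.+1) ->
  leq (size A) ((size P).-1 + j) -> (forall i, leq (size A`_i) e) ->
  exists Q S : {poly {poly R}}, ((lead_coef P)%:P ^+ j * A = Q * P + S) /\
    leq (size S) (size P).-1 /\ (forall i, leq (size S`_i) (e + j * a)).
Proof.
move=> nz_P small_P; elim: j e A => [|j IH] e A size_A small_A.
  exists 0, A; rewrite expr0 mul1r mul0r add0r addn0 in size_A *.
  by do 2!split=> //; move=> i; rewrite mul0n addn0.
rewrite addnS in size_A.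
have [Q [S [def_A [size_S small_S]]]] := IH _ _ (size_pseudo_divp_step nz_P size_A)
  (fun i => coef_size_pseudo_divp_step j i small_P small_A).
exists (Q + (lead_coef P)%:P ^+ j * (A`_((size P).-1 + j))%:P * 'X^j), S.
split; last by split=> // i; have := small_S i; rewrite mulSn; lia.
rewrite exprSr -mulrA -[_%:P * A](subrK ((A`_((size P).-1 + j))%:P * ('X^j * P))).
by rewrite mulrDr def_A; ring.
Qed.

Lemma dvdp_horner_sub (d : {poly R}) (Q : {poly {poly R}}) x y :
  d %| y - x -> d %| Q.[y] - Q.[x].
Proof.
move=> dvd_d; elim/poly_ind: Q => [|Q c IH]; first by rewrite !horner0 subr0 dvdp0.
rewrite !hornerMXaddC.
have -> : Q.[y] * y + c - (Q.[x] * x + c) = (Q.[y] - Q.[x]) * y + Q.[x] * (y - x) by ring.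
by apply: dvdp_add; [apply: dvdp_mulr | apply: dvdp_mull].
Qed.

Lemma dvdp_Xn_sub1_mul r q : ('X^r - 1 : {poly R}) %| 'X^(r * q) - 1.
Proof.
elim: q => [|q IH]; first by rewrite muln0 expr0 subrr dvdp0.
have -> : ('X^(r * q.+1) - 1 : {poly R}) = 'X^r * ('X^(r * q) - 1) + ('X^r - 1).
  by rewrite mulnS exprD; ring.
by rewrite dvdp_add // dvdp_mull.
Qed.

Lemma dvdp_horner_Xn_period (c : {poly R}) (Q : {poly {poly R}}) r E q :
  c %| 'X^r - 1 -> c %| Q.['X^(E + r * q)] - Q.['X^E].
Proof.
move=> dvd_c; apply: dvdp_horner_sub.
have -> : ('X^(E + r * q) - 'X^E : {poly R}) = 'X^E * ('X^(r * q) - 1) by rewrite exprD; ring.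
by apply/dvdp_mull/(dvdp_trans dvd_c)/dvdp_Xn_sub1_mul.
Qed.

End PseudoDivision.

Section FiniteField.
Variable F : finFieldType.
Implicit Types (A P Q S : {poly {poly F}}) (c : {poly F}).

(* Pigeonhole on the residues of X^m, m <= #|F|^deg c, modulo c; X is invertible mod c. *)
Lemma dvdp_Xn_sub1_exists c : c`_0 != 0 ->
  exists r, [/\ (0 < r)%N, (r <= #|F| ^ (size c).-1)%N & c %| 'X^r - 1].
Proof.
move=> nz_c0; have nz_c : c != 0 by apply: contraNneq nz_c0 => ->; rewrite coef0.
set d := (size c).-1.
pose res (m : 'I_(#|F| ^ d).+1) := [ffun i : 'I_d => ('X^m %% c)`_i].
have /injectivePn [m [m' ne_mm' eq_res]] : ~~ injectiveb res.
  by apply/negP => /injectiveP /leq_card; rewrite card_ffun !card_ord ltnn.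
have small_mod k : leq (size ('X^k %% c)) d by rewrite /d -ltnS prednK ?size_poly_gt0 ?ltn_modp.
have dvd_sub : c %| 'X^m - 'X^m'.
  have eq_mod : 'X^m %% c = 'X^m' %% c.
    apply/polyP => i; case: (ltnP i d) => [lt_id | le_di].
      by have := congr1 (fun g : {ffun 'I_d -> F} => g (Ordinal lt_id)) eq_res; rewrite !ffunE.
    by rewrite !nth_default // (leq_trans (small_mod _)).
  rewrite [X in X - _](divp_eq _ c) [X in _ - X](divp_eq _ c) eq_mod.
  by rewrite opprD addrACA subrr addr0 -mulrBl dvdp_mull.
have period k1 k2 : (k1 < k2)%N -> c %| 'X^k2 - 'X^k1 -> c %| 'X^(k2 - k1) - 1.
  move=> lt_k12 dvd_c; rewrite -(dvdp_XnM _ k1 nz_c0) mulrBr mulr1 -exprD subnKC //.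
  exact: ltnW.
case: (ltngtP m m') => [lt_mm' | lt_m'm | eq_mm']; last by rewrite (val_inj eq_mm') eqxx in ne_mm'.
- exists (m' - m)%N; split; [lia | have := ltn_ord m'; lia | ].
  by apply: period; rewrite // -opprB dvdpNr.
- by exists (m - m')%N; split; [lia | have := ltn_ord m; lia | apply: period].
Qed.

(* Solvability of the equation at |delta| = E. *)
Definition ldvdp_at A P (E : nat) := ldvdp P.['X^E] A.['X^E].

Lemma ldvdp_at_remainder_eq0 A P Q S c a e E :
  P`_0 != 0 -> (forall i, leq (size P`_i) a.+1) ->
  c%:P * A = Q * P + S -> leq (size S) (size P).-1 -> (forall i, leq (size S`_i) e) ->
  (a + e <= E)%N -> ldvdp_at A P E -> S = 0.
Proof.
move=> nz_P0 small_P def_cA size_S small_S le_E [j dvd_PA].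
apply/eqP; apply: contraT => nz_S.
have nz_P : P != 0 by apply: contraNneq nz_P0 => ->; rewrite coef0.
have pos_e : (0 < e)%N.
  apply: leq_trans (small_S (size S).-1); rewrite -lead_coefE size_poly_gt0 lead_coef_eq0 //.
have nz_SE : S.['X^E] != 0.
  by apply: contra nz_S => /eqP /horner_Xn_eq0 -> // i; apply: leq_trans (small_S i) _; lia.
have dvd_PS : ldvdp P.['X^E] S.['X^E].
  exists j; have -> : S.['X^E] = c * A.['X^E] - Q.['X^E] * P.['X^E].
    by have := congr1 (horner^~ 'X^E) def_cA; rewrite /= !hornerE => ->; ring.
  by rewrite mulrBr mulrCA dvdp_sub //; [exact: dvdp_mull | exact/dvdp_mull/dvdp_mull/dvdpp].
(* P(X^E) has a nonzero coefficient in degree m <= a, so its degree is at most a plus that of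
   S(X^E), whereas it exceeds the latter by about E. *)
set m := (size P`_0).-1.
have le_ma : (m <= a)%N by rewrite /m; have := small_P 0%N; case: (size _).
have nz_PEm : P.['X^E]`_m != 0.
  by rewrite coef_horner_Xn_small ?/m -?lead_coefE ?lead_coef_eq0 //; lia.
have := ldvdp_size_le nz_SE dvd_PS nz_PEm; rewrite (size_horner_Xn nz_P small_P); last by lia.
have pos_lc : (0 < size (lead_coef P))%N by rewrite size_poly_gt0 lead_coef_eq0.
have [K0 | pos_K] := posnP (size P).-1.
  by move: size_S; rewrite K0 leqn0 size_poly_eq0 (negbTE nz_S).
have KE : ((size P).-1 * E = (size P).-1.-1 * E + E)%N.
  by rewrite -{1}(prednK pos_K) mulSn addnC.
have := size_horner_Xn_le E size_S small_S; rewrite KE.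
by move: (size S.['X^E]) (size (lead_coef P)) ((size P).-1.-1 * E)%N pos_lc => sS slc KE'; lia.
Qed.

Lemma ldvdp_at_iff_dvdp A P Q c c' i E : c'`_0 != 0 -> c = c' * 'X^i ->
  c%:P * A = Q * P -> P.['X^E] != 0 -> ldvdp_at A P E <-> c' %| Q.['X^E].
Proof.
move=> nz_c'0 def_c def_cA nz_PE.
have def_cAE : c * A.['X^E] = Q.['X^E] * P.['X^E].
  by have := congr1 (horner^~ 'X^E) def_cA; rewrite /= hornerCM hornerM.
split=> [[j /dvdpP [q def_q]] | /dvdpP [q def_QE]].
  have def_QjE : 'X^j * Q.['X^E] = c * q.
    apply: (mulIf nz_PE); rewrite -mulrA -def_cAE mulrCA def_q; ring.
  by rewrite -(dvdp_XnM _ j nz_c'0) def_QjE def_c -mulrA dvdp_mulIl.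
exists i; apply/dvdpP; exists q; apply: (@mulfI _ c').
  by apply: contraNneq nz_c'0 => ->; rewrite coef0.
by rewrite mulrA -def_c def_cAE def_QE; ring.
Qed.

Lemma ldvdp_at_small_coprimeY A P a b E0 : P`_0 != 0 ->
  (forall i, leq (size P`_i) a.+1) -> (forall i, leq (size A`_i) a.+1) ->
  leq (size A) b.+1 -> ldvdp_at A P E0 ->
  exists E, ldvdp_at A P E /\ (E < (b + 3) * a + 1 + #|F| ^ ((b + 1) * a))%N.
Proof.
move=> nz_P0 small_P small_A size_A solE0.
have nz_P : P != 0 by apply: contraNneq nz_P0 => ->; rewrite coef0.
set T := ((b + 3) * a + 1)%N.
have [lt_E0T | le_TE0] := ltnP E0 T; first by exists E0; rewrite ltn_addr.
set lc := lead_coef P; have nz_lc : lc != 0 by rewrite lead_coef_eq0.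
have size_A' : leq (size A) ((size P).-1 + b.+1) by rewrite (leq_trans size_A) ?leq_addl.
have [Q [S [def_cA [size_S small_S]]]] := pseudo_divp_coef_size nz_P small_P size_A' small_A.
rewrite -polyC_exp in def_cA; set c := lc ^+ b.+1 in def_cA.
have S0 : S = 0.
  by apply: ldvdp_at_remainder_eq0 def_cA size_S small_S _ solE0; rewrite // /T; lia.
rewrite S0 addr0 in def_cA.
have nz_c : c != 0 by rewrite expf_neq0.
have [i [def_c nz_c'0]] := poly_drop_lowest nz_c; set c' := drop_poly i c in def_c nz_c'0.
have [r [pos_r le_r dvd_c']] := dvdp_Xn_sub1_exists nz_c'0.
have sol_iff E : (a < E)%N -> ldvdp_at A P E <-> c' %| Q.['X^E].
  by move=> lt_aE; apply: ldvdp_at_iff_dvdp nz_c'0 def_c def_cA (horner_Xn_neq0 nz_P small_P lt_aE).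
set E := (T + (E0 - T) %% r)%N.
have lt_aE : (a < E)%N by rewrite /E /T; lia.
have def_E0 : E0 = (E + r * ((E0 - T) %/ r))%N.
  by rewrite /E -addnA [(_ %% r + _)%N]addnC mulnC -divn_eq subnKC.
exists E; split.
  apply/(sol_iff E lt_aE).
  have -> : Q.['X^E] = Q.['X^E0] - (Q.['X^E0] - Q.['X^E]) by rewrite opprB addrC subrK.
  apply: dvdp_sub; first by apply/(sol_iff E0) => //; lia.
  by rewrite [in X in X - _]def_E0 dvdp_horner_Xn_period.
have size_c' : ((size c').-1 <= (b + 1) * a)%N.
  have nz_c' : c' != 0 by apply: contraNneq nz_c'0 => ->; rewrite coef0.
  have le_lc : leq (size lc) a.+1 by rewrite /lc lead_coefE.
  have := size_poly_exp_leq lc b.+1; rewrite -/c def_c size_mulXn // addn1 mulnC.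
  have : ((size lc).-1 * b.+1 <= a * b.+1)%N by rewrite leq_mul2r -ltnS prednK ?size_poly_gt0 ?orbT.
  lia.
have pos_F : (0 < #|F|)%N by apply/card_gt0P; exists 0.
have := leq_trans le_r (leq_pexp2l pos_F size_c').
by rewrite /E; have := ltn_pmod (E0 - T) pos_r; lia.
Qed.

Lemma ldvdp_at_small A P a b E0 :
  (forall i, leq (size P`_i) a.+1) -> (forall i, leq (size A`_i) a.+1) ->
  leq (size A) b.+1 -> ldvdp_at A P E0 ->
  exists E, ldvdp_at A P E /\
    ((E <= a)%N \/ (P != 0 /\ (E < (b + 3) * a + 1 + #|F| ^ ((b + 1) * a))%N)).
Proof.
move=> small_P small_A size_A solE0.
have [P0 | nz_P] := eqVneq P 0.
  have AE0 : A.['X^E0] = 0.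
    case: solE0 => j; rewrite P0 horner0 dvd0p mulf_eq0 expf_eq0 polyX_eq0 andbF.
    by move/eqP.
  have [le_E0a | lt_aE0] := leqP E0 a; first by exists E0; split; [|left].
  have A0 : A = 0 by apply: horner_Xn_eq0 AE0 => i; apply: leq_trans (small_A i) lt_aE0.
  by exists 0%N; split; [exists 0%N; rewrite A0 horner0 mulr0 dvdp0 | left].
have [k [def_P nz_P'0]] := poly_drop_lowest nz_P; set P' := drop_poly k P in def_P nz_P'0.
have small_P' i : leq (size P'`_i) a.+1 by rewrite coef_drop_poly.
have sol_iff E : ldvdp_at A P E <-> ldvdp_at A P' E.
  by rewrite /ldvdp_at def_P hornerM hornerXn -exprM; apply: ldvdp_mulXn.
have [E [solE le_E]] := ldvdp_at_small_coprimeY nz_P'0 small_P' small_A size_A ((sol_iff E0).1 solE0).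
by exists E; split; [apply/sol_iff | right].
Qed.

End FiniteField.

Definition is_a (l : letter) : bool := if l.1 is Ga then true else false.
Definition is_t (l : letter) : bool := if l.1 is Gt then true else false.
Definition is_x (l : letter) : bool := if l.1 is Gx then true else false.

Definition letter_exp (p : pred letter) (l : letter) : int :=
  if p l then (if l.2 then -1 else 1) else 0.

Definition exp_sum (p : pred letter) (w : word) : int := \sum_(l <- w) letter_exp p l.

Lemma exp_sum_cons p l w : exp_sum p (l :: w) = letter_exp p l + exp_sum p w.
Proof. exact: big_cons. Qed.

Lemma sigma_xE w : sigma_x w = exp_sum is_x w.
Proof. by apply: eq_bigr => -[[] []]. Qed.

Lemma exp_sum_drop_sub p w i j :
  exp_sum p (drop i w) - exp_sum p (drop j w) <= (count p w)%:Z.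
Proof.
have exp_le l : letter_exp p l <= (p l : nat)%:Z /\ - (p l : nat)%:Z <= letter_exp p l.
  by rewrite /letter_exp; case: (p l); case: l.2.
elim: w i j => [|l w IH] i j; first by rewrite !drop_oversize ?subrr.
have [le_l ge_l] := exp_le l; case: i => [|i]; case: j => [|j];
  rewrite ?drop0 ?drop_cons ?exp_sum_cons /=.
- by rewrite subrr; lia.
- by have := IH 0%N j; rewrite drop0; lia.
- by have := IH i 0%N; rewrite drop0; lia.
- by have := IH i j; lia.
Qed.

Lemma count_t_x_le w : (count is_t w + count is_x w <= size w)%N.
Proof. by elim: w => [|[[] s] w IH] //=; lia. Qed.

Lemma eval_word_fst w (D : int) (f : laurent2) :
  (eval_word w (D, f)).1 = exp_sum is_t w + D * exp_sum is_x w.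
Proof.
elim: w => [|[g s] w IH]; first by rewrite /exp_sum !big_nil mulr0.
by rewrite /= IH !exp_sum_cons; case: g; case: s; rewrite /letter_exp /=; ring.
Qed.

(* For each letter a (resp. x^{+-1}) of w, the pair (c, d) such that the letter contributes
   z^(c + d delta) (resp. f z^(c + d delta)) to the second component of w(a, t, (delta, f)). *)
Fixpoint a_pairs (w : word) : seq (int * int) :=
  if w is l :: w' then
    (if is_a l then [:: (- exp_sum is_t w', - exp_sum is_x w')] else [::]) ++ a_pairs w'
  else [::].
Fixpoint x_pairs (w : word) : seq (int * int) :=
  if w is l :: w' then
    (if is_x l then [:: (- exp_sum is_t w', - exp_sum is_x w' + (if l.2 then 1 else 0))]
     else [::]) ++ x_pairs w'
  else [::].

Definition exponents (ps : seq (int * int)) (D : int) := [seq p.1 + p.2 * D | p <- ps].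

Lemma pairs_suffix w p : p \in a_pairs w ++ x_pairs w ->
  exists i, p = (- exp_sum is_t (drop i w), - exp_sum is_x (drop i w)).
Proof.
elim: w => [|[g s] w IH] //=; rewrite /is_a /is_x /=.
have IHS : p \in a_pairs w ++ x_pairs w ->
    exists i, p = (- exp_sum is_t (drop i ((g, s) :: w)), - exp_sum is_x (drop i ((g, s) :: w))).
  by move/IH => [i ->]; exists i.+1.
case: g IHS => /= IHS.
- rewrite in_cons => /orP [/eqP -> | /IHS //]; by exists 1%N; rewrite drop1.
- exact: IHS.
- rewrite mem_cat in_cons => /or3P [p_in | /eqP -> | p_in]; try by apply: IHS; rewrite mem_cat p_in ?orbT.
  case: s {IHS}; last by exists 1%N; rewrite drop1 addr0.
  by exists 0%N; rewrite drop0 !exp_sum_cons /letter_exp /=; congr pair; ring.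
Qed.

Lemma x_pairs_nil w : count is_x w = 0%N -> x_pairs w = [::].
Proof. by elim: w => [|[[] s] w IH] //= /IH ->. Qed.

Definition xor_mem (L : seq int) (k : int) : bool := foldr (fun e b => (k == e) (+) b) false L.
Definition xor_shift_mem (f : laurent2) (L : seq int) (k : int) : bool :=
  foldr (fun e b => (k - e \in f) (+) b) false L.

Lemma mem_ladd (f g : laurent2) (k : int) : (k \in ladd f g) = (k \in f) (+) (k \in g).
Proof. by rewrite /ladd in_fsetU !in_fsetD; case: (k \in f); case: (k \in g). Qed.

Lemma mem_lshift (f : laurent2) (d k : int) : (k \in Defs.lshift f d) = (k + d \in f).
Proof.
apply/imfsetP/idP => [[x x_in ->] | kd_in]; first by rewrite subrK.
by exists (k + d); rewrite ?addrK.
Qed.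

Lemma mem_eval_word_snd w (D : int) (f : laurent2) (k : int) :
  (k \in (eval_word w (D, f)).2) =
  xor_mem (exponents (a_pairs w) D) k (+) xor_shift_mem f (exponents (x_pairs w) D) k.
Proof.
elim: w k => [|[g s] w IH] k /=; first by rewrite in_fset0.
rewrite mem_ladd mem_lshift IH eval_word_fst.
case: g; case: s => /=; rewrite ?mem_lshift ?in_fset1 ?in_fset0 ?addbA //.
- by congr (_ (+) _ (+) _); apply/eqP/eqP; lia.
- by congr (_ (+) _ (+) _); apply/eqP/eqP; lia.
- by rewrite [xor_mem _ _ (+) _]addbC; congr (_ (+) _ (+) _); congr (_ \in f); ring.
- by rewrite [xor_mem _ _ (+) _]addbC; congr (_ (+) _ (+) _); congr (_ \in f); ring.
Qed.

Lemma is_solutionE w (D : int) : exp_sum is_t w = 0 -> exp_sum is_x w = 0 ->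
  (exists f, is_solution w (D, f)) <->
  (exists f : laurent2, forall k,
     xor_mem (exponents (a_pairs w) D) k = xor_shift_mem f (exponents (x_pairs w) D) k).
Proof.
move=> t0 x0; split=> -[f sol_f]; exists f.
  move=> k; have := mem_eval_word_snd w D f k; rewrite sol_f in_fset0.
  by case: (xor_mem _ k); case: (xor_shift_mem _ _ k).
rewrite /is_solution; have := eval_word_fst w D f; have := mem_eval_word_snd w D f.
case: (eval_word w (D, f)) => d g /= mem_g ->; rewrite t0 x0 mulr0 addr0; congr pair.
by apply/fsetP => k; rewrite mem_g sol_f in_fset0; case: (xor_shift_mem _ _ k).
Qed.

Notation F2 := 'F_2.

Lemma F2_addr_neq0 (x y : F2) : (x + y != 0) = (x != 0) (+) (y != 0).
Proof. by case: x => [[|[|m]] ?]; case: y => [[|[|n]] ?]. Qed.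

Lemma F2_inj_neq0 (x y : F2) : (x != 0) = (y != 0) -> x = y.
Proof. by case: x => [[|[|m]] ?]; case: y => [[|[|n]] ?] //= _; apply/val_inj. Qed.

(* k lies in the support of the Laurent polynomial z^(-o) q. *)
Definition lsupp (q : {poly F2}) (o k : int) : bool :=
  (0 <= k + o) && (q`_(absz (k + o)) != 0).

Lemma xor_mem_uniq s k : uniq s -> xor_mem s k = (k \in s).
Proof.
elim: s => [|x s IH] //= /andP [x_notin /IH ->]; rewrite in_cons.
by case: (eqVneq k x) => [-> | ]; rewrite ?(negbTE x_notin).
Qed.

Lemma lsuppD p q o k : lsupp (p + q) o k = lsupp p o k (+) lsupp q o k.
Proof. by rewrite /lsupp coefD F2_addr_neq0; case: (0 <= k + o). Qed.

Lemma lsupp0 o k : lsupp 0 o k = false.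
Proof. by rewrite /lsupp coef0 eqxx andbF. Qed.

Lemma lsuppXn e N k : 0 <= e + N -> lsupp 'X^(absz (e + N)) N k = (k == e).
Proof.
move=> ge0_eN; rewrite /lsupp coefXn.
have -> (b : bool) : ((b%:R : F2) != 0) = b by case: b.
by case: (boolP (0 <= k + N)) => ge0_kN /=; apply/eqP/eqP; lia.
Qed.

Lemma lsuppMXn q e N o k : 0 <= e + N ->
  lsupp (q * 'X^(absz (e + N))) (o + N) k = lsupp q o (k - e).
Proof.
move=> ge0_eN; rewrite /lsupp coefMXn.
case: (boolP (0 <= k - e + o)) => ge0_keo /=.
  have -> : (0 <= k + (o + N)) = true by apply/idP; lia.
  have -> : (absz (k + (o + N))%R < absz (e + N)%R)%N = false by apply/negbTE; lia.
  by have -> : (absz (k + (o + N))%R - absz (e + N)%R)%N = absz (k - e + o) by lia.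
case: (boolP (0 <= k + (o + N))) => //= ge0_koN.
by have -> : (absz (k + (o + N))%R < absz (e + N)%R)%N = true by apply/idP; lia.
Qed.

Lemma lsupp_inj p q (o : int) : (forall k, lsupp p o k = lsupp q o k) -> p = q.
Proof.
move=> eq_pq; apply/polyP => i; apply: F2_inj_neq0.
by have := eq_pq (i%:Z - o); rewrite /lsupp subrK.
Qed.

Definition exps_poly (N : int) (L : seq int) : {poly F2} := \sum_(e <- L) 'X^(absz (e + N)).

Lemma xor_mem_lsupp L N k : (forall e, e \in L -> 0 <= e + N) ->
  xor_mem L k = lsupp (exps_poly N L) N k.
Proof.
elim: L => [|e L IH] ge0_L; first by rewrite /exps_poly big_nil lsupp0.
rewrite /exps_poly big_cons lsuppD lsuppXn ?ge0_L ?mem_head //= IH // => x x_in.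
by rewrite ge0_L // in_cons x_in orbT.
Qed.

Lemma xor_shift_mem_lsupp (f : laurent2) q o L N k : (forall k, (k \in f) = lsupp q o k) ->
  (forall e, e \in L -> 0 <= e + N) ->
  xor_shift_mem f L k = lsupp (q * exps_poly N L) (o + N) k.
Proof.
move=> def_f; elim: L => [|e L IH] ge0_L; first by rewrite /exps_poly big_nil mulr0 lsupp0.
rewrite /exps_poly big_cons mulrDr lsuppD lsuppMXn ?ge0_L ?mem_head //= IH ?def_f // => x x_in.
by rewrite ge0_L // in_cons x_in orbT.
Qed.

Lemma laurent2_poly (f : laurent2) : exists (q : {poly F2}) (o : nat),
  forall k, (k \in f) = lsupp q o%:Z k.
Proof.
pose o := (\sum_(x <- f) absz x)%N.
have ge0_f x : x \in (f : seq int) -> 0 <= x + o%:Z.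
  move=> x_in; have : (absz x <= o)%N by rewrite /o (big_rem x) ?leq_addr.
  lia.
by exists (exps_poly o%:Z f), o => k; rewrite -(xor_mem_lsupp _ ge0_f) xor_mem_uniq ?fset_uniq.
Qed.

Definition laurent2_of_poly (q : {poly F2}) (o : int) : laurent2 :=
  [fset (i%:Z - o)%R | i in [seq i <- iota 0 (size q) | q`_i != 0]]%fset.

Lemma mem_laurent2_of_poly q o k : (k \in laurent2_of_poly q o) = lsupp q o k.
Proof.
rewrite /lsupp; apply/imfsetP/idP => [[i i_in ->] | /andP [ge0_ko nz_q]].
  by move: i_in; rewrite mem_filter subrK => /andP [-> _].
exists (absz (k + o)); last by lia.
rewrite mem_filter mem_iota nz_q add0n /=.
by apply: contraNT nz_q; rewrite -leqNgt => /(nth_default 0) ->.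
Qed.

(* Multiplying by z^N makes all exponents nonnegative. *)
Lemma solvable_iff_ldvdp La Lx N : (forall e, e \in La ++ Lx -> 0 <= e + N) ->
  (exists f : laurent2, forall k, xor_mem La k = xor_shift_mem f Lx k) <->
  ldvdp (exps_poly N Lx) (exps_poly N La).
Proof.
move=> ge0_L.
have ge0_La e : e \in La -> 0 <= e + N by move=> e_in; rewrite ge0_L // mem_cat e_in.
have ge0_Lx e : e \in Lx -> 0 <= e + N by move=> e_in; rewrite ge0_L // mem_cat e_in orbT.
split=> [[f sol_f] | [j /dvdpP [q def_q]]].
  have [q [o def_f]] := laurent2_poly f.
  have eq_pq : exps_poly N La * 'X^o = q * exps_poly N Lx.
    apply: (@lsupp_inj _ _ (N + o%:Z)) => k.
    have := @lsuppMXn (exps_poly N La) 0 o%:Z N k; rewrite add0r subr0 => -> //.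
    by rewrite [N + _]addrC -(xor_mem_lsupp k ge0_La) sol_f (xor_shift_mem_lsupp k def_f ge0_Lx).
  by exists o; rewrite mulrC eq_pq dvdp_mulIr.
exists (laurent2_of_poly q j%:Z) => k.
rewrite (xor_mem_lsupp k ge0_La) (xor_shift_mem_lsupp k (mem_laurent2_of_poly q j%:Z) ge0_Lx).
rewrite -def_q mulrC addrC.
by have := @lsuppMXn (exps_poly N La) 0 j%:Z N k; rewrite add0r subr0 => <-.
Qed.

Definition bool_sign (s : bool) : int := if s then -1 else 1.

(* The bivariate polynomial sum_p X^(p.1 - am) Y^(s p.2 - bm); substituting Y := X^E gives the
   polynomial of the exponents p.1 + p.2 (s E), up to the shift X^(am + bm E). *)
Definition pairs_bipoly (ps : seq (int * int)) (s : bool) (am bm : int) : {poly {poly F2}} :=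
  \sum_(p <- ps) ('X^(absz (p.1 - am)%R))%:P * 'X^(absz (bool_sign s * p.2 - bm)%R).

Section PairsBipoly.
Variables (ps : seq (int * int)) (s : bool) (am bm : int).
Hypothesis ge_ps : forall p, p \in ps -> am <= p.1 /\ bm <= bool_sign s * p.2.

Lemma exps_poly_bipoly (E : nat) :
  exps_poly (- am - bm * E%:Z) (exponents ps (bool_sign s * E%:Z)) = (pairs_bipoly ps s am bm).['X^E].
Proof.
rewrite /exps_poly /exponents big_map /pairs_bipoly horner_sum; apply: eq_big_seq => p p_in.
rewrite hornerCM hornerXn -exprM -exprD; congr ('X^_).
have [] := ge_ps p_in; case: s; rewrite /bool_sign; move: (p.1) (p.2) => x y; nia.
Qed.

Lemma exponents_shift_ge0 (E : nat) e : e \in exponents ps (bool_sign s * E%:Z) ->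
  0 <= e + (- am - bm * E%:Z).
Proof.
case/mapP => p p_in ->; have [] := ge_ps p_in; case: s; rewrite /bool_sign;
  by move: (p.1) (p.2) => x y; nia.
Qed.

End PairsBipoly.

Lemma size_coef_pairs_bipoly ps s am bm (a : nat) :
  (forall p, p \in ps -> am <= p.1 <= am + a%:Z) ->
  forall i, leq (size (pairs_bipoly ps s am bm)`_i) a.+1.
Proof.
move=> bnd_ps i; elim: ps bnd_ps => [|p ps IH] bnd_ps.
  by rewrite /pairs_bipoly big_nil coef0 size_poly0.
rewrite /pairs_bipoly big_cons coefD (leq_trans (size_polyD _ _)) // geq_max.
rewrite IH ?andbT => [|q q_in]; last by rewrite bnd_ps // in_cons q_in orbT.
rewrite coefCM coefXn; case: (i == _); rewrite ?mulr0 ?size_poly0 // mulr1 size_polyXn.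
by have := bnd_ps p (mem_head _ _); move: (p.1) => x; lia.
Qed.

Lemma size_pairs_bipoly ps s am bm (b : nat) :
  (forall p, p \in ps -> bm <= bool_sign s * p.2 <= bm + b%:Z) ->
  leq (size (pairs_bipoly ps s am bm)) b.+1.
Proof.
elim: ps => [|p ps IH] bnd_ps; first by rewrite /pairs_bipoly big_nil size_poly0.
rewrite /pairs_bipoly big_cons (leq_trans (size_polyD _ _)) // geq_max.
rewrite IH ?andbT => [|q q_in]; last by rewrite bnd_ps // in_cons q_in orbT.
rewrite (leq_trans (size_polyMleq _ _)) // size_polyXn size_polyC.
by have := bnd_ps p (mem_head _ _); move: (bool_sign s * p.2) => y; case: (_ != 0) => /=; lia.
Qed.

Lemma solvable_iff_ldvdp_at w s am bm (E : nat) :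
  exp_sum is_t w = 0 -> exp_sum is_x w = 0 ->
  (forall p, p \in a_pairs w ++ x_pairs w -> am <= p.1 /\ bm <= bool_sign s * p.2) ->
  (exists f, is_solution w (bool_sign s * E%:Z, f)) <->
  ldvdp_at (pairs_bipoly (a_pairs w) s am bm) (pairs_bipoly (x_pairs w) s am bm) E.
Proof.
move=> t0 x0 ge_ps.
have ge_a p : p \in a_pairs w -> am <= p.1 /\ bm <= bool_sign s * p.2.
  by move=> p_in; apply: ge_ps; rewrite mem_cat p_in.
have ge_x p : p \in x_pairs w -> am <= p.1 /\ bm <= bool_sign s * p.2.
  by move=> p_in; apply: ge_ps; rewrite mem_cat p_in orbT.
rewrite is_solutionE // (solvable_iff_ldvdp (N := - am - bm * E%:Z)).
  by rewrite /ldvdp_at !exps_poly_bipoly.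
move=> e; rewrite mem_cat => /orP [] /exponents_shift_ge0; [exact | exact].
Qed.

Lemma seq_min_exists (x0 : int) L : exists2 m, m \in x0 :: L & forall x, x \in x0 :: L -> m <= x.
Proof.
elim: L x0 => [|y L IH] x0; first by exists x0; rewrite ?mem_head // => x /[!inE] /eqP ->.
have [m m_in min_m] := IH y; case: (boolP (x0 <= m)) => [le_x0m | lt_mx0].
  exists x0; rewrite ?mem_head // => x /[!in_cons] /orP [/eqP -> // | /min_m]; lia.
exists m => [|x /[!in_cons] /orP [/eqP -> | /min_m //]]; first by rewrite in_cons m_in orbT.
lia.
Qed.

Lemma seq_window (L : seq int) (c : int) : (forall x y, x \in L -> y \in L -> x - y <= c) ->
  exists m, forall x, x \in L -> m <= x <= m + c.
Proof.
case: L => [|x0 L] spread_L; first by exists 0.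
have [m m_in min_m] := seq_min_exists x0 L.
by exists m => x x_in; have := spread_L x m x_in m_in; have := min_m x x_in; lia.
Qed.

(* The exponents of the a-letters and x-letters of w all lie in a window of width
   (#t-letters) x (#x-letters), because they are exponent sums over suffixes of w. *)
Lemma pairs_window w s : exists am bm, forall p, p \in a_pairs w ++ x_pairs w ->
  am <= p.1 <= am + (count is_t w)%:Z /\
  bm <= bool_sign s * p.2 <= bm + (count is_x w)%:Z.
Proof.
set ps := a_pairs w ++ x_pairs w.
have [am win_am] : exists am, forall x, x \in [seq p.1 | p <- ps] ->
    am <= x <= am + (count is_t w)%:Z.
  apply: seq_window => _ _ /mapP [p /pairs_suffix [i ->] ->] /mapP [q /pairs_suffix [j ->] ->].
  by have := exp_sum_drop_sub is_t w j i; rewrite /=; lia.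
have [bm win_bm] : exists bm, forall x, x \in [seq bool_sign s * p.2 | p <- ps] ->
    bm <= x <= bm + (count is_x w)%:Z.
  apply: seq_window => _ _ /mapP [p /pairs_suffix [i ->] ->] /mapP [q /pairs_suffix [j ->] ->].
  have := exp_sum_drop_sub is_x w j i; have := exp_sum_drop_sub is_x w i j.
  by rewrite /bool_sign; case: s => /=; lia.
by exists am, bm => p p_in; rewrite win_am ?win_bm ?(map_f _ p_in).
Qed.

Lemma small_solution w : sigma_x w = 0 -> (exists g, is_solution w g) ->
  exists (delta : int) (f : laurent2), is_solution w (delta, f) /\
    ((absz delta <= count is_t w)%N \/ ((0 < count is_x w)%N /\
     (absz delta < (count is_x w + 3) * count is_t w + 1
                   + 2 ^ ((count is_x w + 1) * count is_t w))%N)).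
Proof.
rewrite sigma_xE => x0 [[D0 f0] sol0].
have t0 : exp_sum is_t w = 0 by have := eval_word_fst w D0 f0; rewrite sol0 x0 mulr0 addr0.
set s := D0 < 0.
have def_D0 : D0 = bool_sign s * (absz D0)%:Z.
  by rewrite /bool_sign /s; case: (boolP (D0 < 0)) => ?; lia.
have [am [bm win]] := pairs_window w s.
set a := count is_t w; set b := count is_x w.
set A := pairs_bipoly (a_pairs w) s am bm; set P := pairs_bipoly (x_pairs w) s am bm.
have sol_iff E : (exists f, is_solution w (bool_sign s * E%:Z, f)) <-> ldvdp_at A P E.
  by apply: solvable_iff_ldvdp_at => // p /win [/andP [-> _] /andP [-> _]].
have win_A p : p \in a_pairs w ->
    am <= p.1 <= am + a%:Z /\ bm <= bool_sign s * p.2 <= bm + b%:Z.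
  by move=> p_in; apply: win; rewrite mem_cat p_in.
have win_P p : p \in x_pairs w -> am <= p.1 <= am + a%:Z.
  by move=> p_in; have [] := win p; rewrite // mem_cat p_in orbT.
have small_A := size_coef_pairs_bipoly s bm (fun p p_in => (win_A p p_in).1).
have small_P := size_coef_pairs_bipoly s bm win_P.
have size_A := size_pairs_bipoly am (fun p p_in => (win_A p p_in).2).
have solD0 : ldvdp_at A P (absz D0) by apply/sol_iff; exists f0; rewrite -def_D0.
have [E [solE le_E]] := ldvdp_at_small small_P small_A size_A solD0.
have [f sol_f] := (sol_iff E).2 solE.
exists (bool_sign s * E%:Z), f; split=> //.
have -> : absz (bool_sign s * E%:Z) = E by rewrite abszM /bool_sign; case: (s); rewrite /= mul1n.
rewrite (card_Fp (isT : prime 2)) in le_E.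
case: le_E => [le_Ea | [nz_P lt_E]]; [by left | right; split=> //].
by rewrite lt0n; apply: contraNneq nz_P => b0; rewrite /P x_pairs_nil // /pairs_bipoly big_nil.
Qed.

From Stdlib Require Rdefinitions Raxioms RIneq Rpower.
From Stdlib Require Import Lra.

Lemma expn_Natpow m n : expn m n = Nat.pow m n.
Proof. by elim: n => // n IH; rewrite expnS IH /=; lia. Qed.

(* 2 ^ ((b + 1) a) <= 2 ^ (n^2 / 2) because 2 (b + 1) a <= (a + b)^2 when b >= 1. *)
Lemma INR_le_bound (n a b E : nat) : (a + b <= n)%N ->
  ((E <= a)%N \/ ((0 < b)%N /\ (E < (b + 3) * a + 1 + 2 ^ ((b + 1) * a))%N)) ->
  Rdefinitions.Rle (Raxioms.INR E) (bound n).
Proof.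
move=> le_abn le_E; rewrite /bound.
set r := Rpower.Rpower _ _.
have pos_r : Rdefinitions.Rlt (Rdefinitions.IZR BinNums.Z0) r by apply: Exp_prop.exp_pos.
case: le_E => [le_Ea | [pos_b lt_E]].
  have /leP/RIneq.le_INR : (E <= 2 * (n * n) + 3 * n + 1)%N by nia.
  lra.
set m := ((b + 1) * a)%N.
have le_m : (2 * m <= n * n)%N.
  have : ((a + b) * (a + b) <= n * n)%N by apply: leq_mul.
  by rewrite /m; nia.
have /leP/RIneq.le_INR : (E <= (2 * (n * n) + 3 * n + 1) + 2 ^ m)%N by rewrite /m in lt_E *; nia.
rewrite RIneq.plus_INR.
have : Rdefinitions.Rle (Raxioms.INR (2 ^ m)) r.
  rewrite /r expn_Natpow RIneq.pow_INR -Rpower.Rpower_pow /=; last by lra.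
  apply: Rpower.Rle_Rpower; first by lra.
  by move/leP/RIneq.le_INR: le_m; rewrite RIneq.mult_INR /=; lra.
lra.
Qed.

Theorem mainTheorem1 (w : word) :
  sigma_x w = 0%R ->
  (exists g : L2, is_solution w g) ->
  exists (delta : int) (f : laurent2),
    is_solution w (delta, f) /\ abs_le_bound delta (size w).
Proof.
move=> x0 solvable; have [delta [f [sol_f le_delta]]] := small_solution x0 solvable.
by exists delta, f; split=> //; apply: INR_le_bound (count_t_x_le w) _.
Qed.
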